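(* Let $\mathcal{V}_t$ be a variety of $\Omega$-algebras (of a plural type) satisfying the identity $t(x,y)=x$ for some $t\in T_2$, and let $\Sigma$ be an equational base for $\mathcal{V}_t$. Then the Mal'tsev product $\mathcal{V}_t\circ\mathcal{S}$ is a variety; in fact $\mathcal{V}_t\circ\mathcal{S}=\mathcal{V}_t^{\,p}$, and $\Sigma^p$ is an equational base for $\mathcal{V}_t\circ\mathcal{S}$.
   Context: Standing conventions: $\Omega$-algebras are of a plural similarity type, i.e. there are no nullary operation symbols and at least one operation symbol of arity $\ge 2$. For $n\ge 1$, $T_n$ denotes the set of $\Omega$-terms in the variables $x_1,\dots,x_n$ in which each of these $n$ variables actually occurs. An identity is regular if exactly the same variables occur on both sides. $\mathcal{S}$ denotes the variety of $\Omega$-semilattices: all $\Omega$-algebras of the given type satisfying every regular identity (in such an algebra any term in $T_2$ is a semilattice operation, and every basic $n$-ary operation equals the $n$-fold product in this semilattice). For a class $\mathcal{V}$ of $\Omega$-algebras, the Mal'tsev product $\mathcal{V}\circ\mathcal{S}$ is the class of all $\Omega$-algebras $A$ having a congruence $\theta$ such that $A/\theta\in\mathcal{S}$ and every $\theta$-class (which is a subalgebra, since $\mathcal{S}$ is idempotent) belongs to $\mathcal{V}$; such $A$ is called a semilattice sum of $\mathcal{V}$-algebras. Prolongation: for an identity $\sigma$ of the form $u(y_1,\dots,y_n)=v(y_1,\dots,y_n)$ (where the variables of the terms $u,v$ are among $y_1,\dots,y_n$, not necessarily all occurring) and $m\ge1$, let $\sigma^p_m$ be the set of all identities $u(r_1,\dots,r_n)=v(r_1,\dots,r_n)$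 obtained by substituting $r_i(x_1,\dots,x_m)$ for $y_i$, where $r_1,\dots,r_n$ range over $T_m$. Let $\sigma^p=\bigcup_{m>0}\sigma^p_m$, and for a set $\Sigma$ of identities $\Sigma^p=\bigcup_{\sigma\in\Sigma}\sigma^p$. For a variety $\mathcal{V}$, its prolongation $\mathcal{V}^p$ is the variety defined by $\mathrm{Id}(\mathcal{V})^p$, where $\mathrm{Id}(\mathcal{V})$ is the set of all identities holding in $\mathcal{V}$. *)

From mathcomp Require Import all_boot.
Set Implicit Arguments. Unset Strict Implicit. Unset Printing Implicit Defensive.

Section UA.
Variables (O : Type) (ar : O -> nat).

Definition plural : Prop := (forall o, 0 < ar o) /\ (exists o, 2 <= ar o).

Inductive term : Type :=
| Var : nat -> term
| App : forall o : O, ('I_(ar o) -> term) -> term.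
Arguments App o _ : clear implicits.

Fixpoint occurs (i : nat) (t : term) : Prop :=
  match t with
  | Var j => i = j
  | App o f => exists k, occurs i (f k)
  end.

Definition in_T (n : nat) (t : term) : Prop :=
  forall i, occurs i t <-> i < n.

Definition identity := (term * term)%type.

Definition regular (s : identity) : Prop :=
  forall i, occurs i s.1 <-> occurs i s.2.

Record algebra := Algebra {
  carrier :> Type;
  op : forall o : O, ('I_(ar o) -> carrier) -> carrier }.
Arguments op a o _ : clear implicits.

Fixpoint eval (A : algebra) (val : nat -> A) (t : term) : A :=
  match t with
  | Var i => val i
  | App o f => op A o (fun k => eval val (f k))
  end.

Definition holds (A : algebra) (s : identity) : Prop :=
  forall val : nat -> A, eval val s.1 = eval val s.2.

Definition Mod (Sigma : identity -> Prop) (A : algebra) : Prop :=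
  forall s, Sigma s -> holds A s.

Definition Id (Sigma : identity -> Prop) (s : identity) : Prop :=
  forall B : algebra, Mod Sigma B -> holds B s.

Definition is_variety (C : algebra -> Prop) : Prop :=
  exists Gamma : identity -> Prop, forall A, C A <-> Mod Gamma A.

Fixpoint subst (r : nat -> term) (t : term) : term :=
  match t with
  | Var i => r i
  | App o f => App o (fun k => subst r (f k))
  end.

Definition prolong (Sigma : identity -> Prop) (s : identity) : Prop :=
  exists u v m (r : nat -> term),
    [/\ Sigma (u, v), 0 < m, (forall i, in_T m (r i)) &
        s = (subst r u, subst r v)].

Definition congruence (A : algebra) (th : A -> A -> Prop) : Prop :=
  [/\ (forall x, th x x), (forall x y, th x y -> th y x),
      (forall x y z, th x y -> th y z -> th x z) &
      (forall o (a b : 'I_(ar o) -> A), (forall k, th (a k) (b k)) ->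
         th (op A o a) (op A o b))].

(* A/th satisfies the identity s (unfolded: evaluations agree modulo th) *)
Definition holds_mod (A : algebra) (th : A -> A -> Prop) (s : identity) : Prop :=
  forall val : nat -> A, th (eval val s.1) (eval val s.2).

(* A/th belongs to the variety S of Omega-semilattices *)
Definition quotient_in_S (A : algebra) (th : A -> A -> Prop) : Prop :=
  forall s, regular s -> holds_mod th s.

Definition class_closed (A : algebra) (th : A -> A -> Prop) (a : A) : Prop :=
  forall o (args : 'I_(ar o) -> A), (forall k, th a (args k)) ->
    th a (op A o args).

Definition class_alg (A : algebra) (th : A -> A -> Prop) (a : A)
  (H : class_closed th a) : algebra :=
  @Algebra {x : A | th a x}
    (fun o args => exist _ (op A o (fun k => sval (args k)))
                          (H o _ (fun k => svalP (args k)))).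

Definition maltsev_S (Sigma : identity -> Prop) (A : algebra) : Prop :=
  exists th : A -> A -> Prop,
    [/\ congruence th, quotient_in_S th &
        forall a : A, exists H : class_closed th a, Mod Sigma (class_alg H)].

End UA.

From mathcomp Require Import all_boot.
From Stdlib Require Import FunctionalExtensionality IndefiniteDescription ProofIrrelevance.
Set Implicit Arguments. Unset Strict Implicit. Unset Printing Implicit Defensive.

(* If A is a semilattice sum of V-algebras, the values of terms r_i with the
   same variables all lie in one class (r_0 = r_i is regular), which is in V;
   so A satisfies Id(V)^p.  If A satisfies Sigma^p, then for a fixed valuation
   the values of the terms of T_m form a subalgebra satisfying Sigma, so A
   satisfies Id(V)^p as well.  Finally, if A satisfies Id(V)^p then
   t(r, s) = r holds in A whenever r and s have the same variables.  This makes
   x ~ y :<-> t(x, y) = x /\ t(y, x) = y a congruence identifying the two sides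
   of every regular identity; inside the class of a, each element w is the
   value of t(x_1, c) with c a term evaluating to a, and evaluating an identity
   of Sigma at such terms (all with the same variables) shows the class is in V. *)

Section Terms.
Variables (O : Type) (ar : O -> nat).
Hypothesis ar_pos : forall o, 0 < ar o.

Lemma eval_subst (A : algebra ar) (val : nat -> A) r (u : term ar) :
  eval val (subst r u) = eval (fun i => eval val (r i)) u.
Proof.
elim: u => [i|o f IH] //=; congr (op _).
by apply: functional_extensionality => k; apply: IH.
Qed.

Lemma eq_eval (A : algebra ar) (f g : nat -> A) (u : term ar) :
  (forall i, occurs i u -> f i = g i) -> eval f u = eval g u.
Proof.
elim: u => [i|o h IH] fg /=; first exact: fg.
congr (op _); apply: functional_extensionality => k.
by apply: IH => i occ_i; apply: fg; exists k.
Qed.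

Lemma occurs_subst j (r : nat -> term ar) u :
  occurs j (subst r u) <-> exists i, occurs i u /\ occurs j (r i).
Proof.
elim: u => [i|o f IH] /=.
  by split=> [occ_j|[i' [-> //]]]; exists i.
split=> [[k /IH [i [occ_i occ_j]]]|[i [[k occ_i] occ_j]]].
  by exists i; split=> //; exists k.
by exists k; apply/IH; exists i.
Qed.

Lemma occurs_exists (u : term ar) : exists i, occurs i u.
Proof.
elim: u => [j|o f IH] /=; first by exists j.
by have [i occ_i] := IH (Ordinal (ar_pos o)); exists i, (Ordinal (ar_pos o)).
Qed.

Fixpoint vars (u : term ar) : seq nat :=
  match u with
  | Var i => [:: i]
  | App o f => flatten [seq vars (f k) | k <- enum 'I_(ar o)]
  end.

Lemma mem_vars i (u : term ar) : i \in vars u <-> occurs i u.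
Proof.
elim: u => [j|o f IH] /=; first by rewrite inE; split=> [/eqP|->].
split=> [/flattenP [s /mapP [k _ ->] /IH]|[k /IH occ_i]]; first by exists k.
by apply/flattenP; exists (vars (f k)) => //; apply/map_f; rewrite mem_enum.
Qed.

Definition subalg (A : algebra ar) (P : A -> Prop)
  (closedP : forall o (args : 'I_(ar o) -> A), (forall k, P (args k)) -> P (op args)) :
  algebra ar :=
  @Algebra _ ar {x : A | P x}
    (fun o args => exist _ (op (fun k => sval (args k)))
                          (closedP o _ (fun k => svalP (args k)))).

Lemma sval_eval (A : algebra ar) P closedP (val : nat -> @subalg A P closedP) u :
  sval (eval val u) = eval (fun i => sval (val i)) u.
Proof.
elim: u => [i|o f IH] //=; congr (op _).
by apply: functional_extensionality => k; apply: IH.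
Qed.

Lemma holds_subalg (A : algebra ar) P closedP u v :
  (forall val : nat -> A, (forall i, P (val i)) -> eval val u = eval val v) ->
  holds (@subalg A P closedP) (u, v).
Proof.
move=> uv val; apply: eq_sig_hprop => [x p q|]; first exact: proof_irrelevance.
by rewrite /= !sval_eval; apply: uv => i; apply: svalP.
Qed.

(* The variables of s need not be x_0, ..., x_(m-1): renaming them by their
   position in a duplicate-free list brings the substitution into Sigma^p_m. *)
Lemma Mod_prolong_subst (Gam : identity ar -> Prop) (A : algebra ar) u v
    (r : nat -> term ar) (s : term ar) :
  Mod (prolong Gam) A -> Gam (u, v) ->
  (forall i j, occurs j (r i) <-> occurs j s) ->
  holds A (subst r u, subst r v).
Proof.
move=> A_prolong Gam_uv r_vars val.
pose L := undup (vars s).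
have mem_L j : j \in L <-> occurs j (r 0) by rewrite mem_undup mem_vars r_vars.
pose r' i := subst (fun j => Var ar (index j L)) (r i).
have r'_T i : in_T (size L) (r' i).
  move=> j; rewrite occurs_subst /=; split=> [[j' [occ_j' ->]]|lt_j].
    by rewrite index_mem; apply/mem_L; rewrite r_vars -(r_vars i).
  exists (nth 0 L j); rewrite index_uniq ?undup_uniq //; split=> //.
  by rewrite r_vars -(r_vars 0); apply/mem_L; rewrite mem_nth.
have L_gt0 : 0 < size L.
  by have [j /mem_L] := occurs_exists (r 0); case: (L).
have eval_r' : (fun i => eval (fun j => val (nth 0 L j)) (r' i)) = fun i => eval val (r i).
  apply: functional_extensionality => i; rewrite eval_subst; apply: eq_eval => j occ_j /=.
  by rewrite nth_index //; apply/mem_L; rewrite r_vars -(r_vars i).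
have prolong_uv : prolong Gam (subst r' u, subst r' v) by exists u, v, (size L), r'.
have := A_prolong _ prolong_uv (fun j => val (nth 0 L j)).
by rewrite /= !eval_subst eval_r' -!eval_subst.
Qed.

Lemma Mod_prolongS (Gam Gam' : identity ar -> Prop) (A : algebra ar) :
  (forall s, Gam s -> Gam' s) -> Mod (prolong Gam') A -> Mod (prolong Gam) A.
Proof.
move=> sub A_prolong s [u [v [m [r [Gam_uv m_gt0 r_T ->]]]]].
by apply: A_prolong; exists u, v, m, r; split=> //; apply: sub.
Qed.

Section Prolongation.
Variable Sigma : identity ar -> Prop.

Lemma Id_sub s : Sigma s -> Id Sigma s.
Proof. by move=> Sigma_s B B_Sigma; apply: B_Sigma. Qed.

Lemma Mod_prolong_Id (A : algebra ar) :
  Mod (prolong Sigma) A -> Mod (prolong (Id Sigma)) A.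
Proof.
move=> A_prolong _ [u [v [m [r [Id_uv m_gt0 r_T ->]]]]] val /=.
pose P x := exists r', in_T m r' /\ eval val r' = x.
have closedP o (args : 'I_(ar o) -> A) : (forall k, P (args k)) -> P (op args).
  move=> /fin_all_exists [rk rkP]; exists (@App _ ar o rk); split; last first.
    by congr (op _); apply: functional_extensionality => k; case: (rkP k).
  move=> j /=; split=> [[k]|lt_j]; first by case: (rkP k) => /(_ j) ->.
  by exists (Ordinal (ar_pos o)); case: (rkP (Ordinal (ar_pos o))) => /(_ j) ->.
have Sigma_P : Mod Sigma (subalg closedP).
  case=> u' v' Sigma_uv'; apply: holds_subalg => val' /functional_choice [r' r'P].
  have -> : val' = fun i => eval val (r' i).
    by apply: functional_extensionality => i; case: (r'P i).
  rewrite -!eval_subst; apply: (A_prolong (_, _)).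
  by exists u', v', m, r'; split=> // i; case: (r'P i).
pose valP i : subalg closedP := exist _ _ (ex_intro _ (r i) (conj (r_T i) erefl)).
by have /(f_equal sval) := Id_uv _ Sigma_P valP; rewrite !sval_eval !eval_subst.
Qed.

Lemma maltsev_S_Mod_prolong_Id (A : algebra ar) :
  maltsev_S Sigma A -> Mod (prolong (Id Sigma)) A.
Proof.
case=> th [_ th_S th_classes] _ [u [v [m [r [Id_uv _ r_T ->]]]]] val /=.
pose a := eval val (r 0).
have th_r i : th a (eval val (r i)).
  by apply: (th_S (r 0, r i)) => j /=; rewrite (r_T 0 j) (r_T i j).
have [closed_a class_Sigma] := th_classes a.
pose valc i : class_alg closed_a := exist _ _ (th_r i).
have /(f_equal sval) := Id_uv _ class_Sigma valc.
by rewrite (sval_eval (closedP := closed_a)) (sval_eval (closedP := closed_a))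
  !eval_subst.
Qed.

End Prolongation.

Section LeftProjection.
Variables (Sigma : identity ar -> Prop) (t : term ar).
Hypotheses (t_T2 : in_T 2 t) (Sigma_t : forall A, Mod Sigma A -> holds A (t, Var ar 0)).

Definition t_term (X Y : term ar) := subst (fun i => if i == 0 then X else Y) t.
Definition t_op (A : algebra ar) (a b : A) := eval (fun i => if i == 0 then a else b) t.

Lemma eval_t_term (A : algebra ar) (val : nat -> A) X Y :
  eval val (t_term X Y) = t_op (eval val X) (eval val Y).
Proof. by rewrite eval_subst; apply: eq_eval => i _; case: (i == 0). Qed.

Lemma occurs_t_term j X Y : occurs j (t_term X Y) <-> occurs j X \/ occurs j Y.
Proof.
rewrite occurs_subst; split=> [[i [/t_T2]]|[occ_j|occ_j]].
- by case: (i == 0); [left|right].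
- by exists 0; split=> //; apply/t_T2.
- by exists 1; split=> //; apply/t_T2.
Qed.

Section Absorption.
Variables (A : algebra ar) (A_prolong : Mod (prolong (Id Sigma)) A).

Lemma t_op_regular (val : nat -> A) X Y :
  (forall j, occurs j X <-> occurs j Y) -> t_op (eval val X) (eval val Y) = eval val X.
Proof.
move=> XY; rewrite -eval_t_term.
apply: (Mod_prolong_subst (u := t) (v := Var ar 0) (s := X) A_prolong Sigma_t).
by move=> i j; case: (i == 0); rewrite ?XY.
Qed.

Definition t_equiv (a b : A) := t_op a b = a /\ t_op b a = b.

Lemma t_equiv_eval_regular (val : nat -> A) X Y :
  (forall j, occurs j X <-> occurs j Y) -> t_equiv (eval val X) (eval val Y).
Proof. by move=> XY; split; apply: t_op_regular => j; rewrite XY. Qed.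

Lemma t_equiv_trans a b c : t_equiv a b -> t_equiv b c -> t_equiv a c.
Proof.
move=> [ab ba] [bc cb].
pose val i := if i == 0 then a else if i == 1 then b else c.
have := @t_equiv_eval_regular val (t_term (Var ar 0) (t_term (Var ar 1) (Var ar 2)))
  (t_term (Var ar 2) (t_term (Var ar 1) (Var ar 0))).
rewrite !eval_t_term /= bc ab ba cb; apply=> j; rewrite !occurs_t_term /=; tauto.
Qed.

Lemma t_equiv_op o (a b : 'I_(ar o) -> A) :
  (forall k, t_equiv (a k) (b k)) -> t_equiv (op a) (op b).
Proof.
move=> ab; set n := ar o; have k0 : 'I_n := Ordinal (ar_pos o).
pose val i := if i < n then a (insubd k0 i) else b (insubd k0 (i - n)).
have val_a (k : 'I_n) : val k = a k by rewrite /val ltn_ord valKd.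
have val_b (k : 'I_n) : val (n + k) = b k.
  by rewrite /val ltnNge leq_addr /= addKn valKd.
pose X := @App _ ar o (fun k => t_term (Var ar k) (Var ar (n + k))).
pose Y := @App _ ar o (fun k => t_term (Var ar (n + k)) (Var ar k)).
have eval_X : eval val X = op a.
  rewrite /X /Y /=; congr (op _); apply: functional_extensionality => k.
  by rewrite eval_t_term /= val_a val_b; case: (ab k).
have eval_Y : eval val Y = op b.
  rewrite /X /Y /=; congr (op _); apply: functional_extensionality => k.
  by rewrite eval_t_term /= val_a val_b; case: (ab k).
rewrite -eval_X -eval_Y; apply: t_equiv_eval_regular => j.
by split=> [[k /occurs_t_term occ_j]|[k /occurs_t_term occ_j]];
  exists k; apply/occurs_t_term; tauto.
Qed.

Lemma t_equiv_congruence : congruence t_equiv.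
Proof.
split; [|by move=> a b []|exact: t_equiv_trans|exact: t_equiv_op].
by move=> a; apply: (@t_equiv_eval_regular (fun _ => a) (Var ar 0) (Var ar 0)).
Qed.

Lemma t_equiv_quotient_in_S : quotient_in_S t_equiv.
Proof. by case=> u v uv val; apply: t_equiv_eval_regular. Qed.

Lemma t_equiv_class_closed a : class_closed t_equiv a.
Proof.
move=> o args a_args; apply: (@t_equiv_trans _ (op (fun _ : 'I_(ar o) => a))).
  apply: (@t_equiv_eval_regular (fun _ => a) (Var ar 0) (@App _ ar o (fun _ => Var ar 0))).
  by move=> j /=; split=> [->|[]//]; exists (Ordinal (ar_pos o)).
exact: t_equiv_op.
Qed.

(* t_chain k = t(...t(t(x_0, x_1), x_2)..., x_k): its value is a as soon as
   x_0 is sent to a and x_1, ..., x_k to elements of the class of a. *)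
Fixpoint t_chain (k : nat) : term ar :=
  if k is k'.+1 then t_term (t_chain k') (Var ar k) else Var ar 0.

Lemma occurs_t_chain j k : occurs j (t_chain k) <-> j <= k.
Proof.
elim: k => [|k IH] /=; first by rewrite leqn0; split=> [->|/eqP].
rewrite occurs_t_term IH /=; split=> [[/leqW|->]//|].
by rewrite leq_eqVlt ltnS => /orP [/eqP|]; [right|left].
Qed.

Lemma t_equiv_class_Mod a (closed_a : class_closed t_equiv a) :
  Mod Sigma (class_alg closed_a).
Proof.
case=> u v Sigma_uv; apply: holds_subalg => w a_w.
pose M := (\max_(j <- vars u ++ vars v) j).+1.
have occ_lt i : occurs i u \/ occurs i v -> i < M.
  move=> occ_i; rewrite ltnS; apply: (leq_bigmax_seq (P := xpredT)) => //.
  by rewrite mem_cat; case: occ_i => /mem_vars ->; rewrite ?orbT.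
pose val i := if i == 0 then a else w i.-1.
have eval_chain k : eval val (t_chain k) = a.
  by elim: k => [|k IH] //=; rewrite eval_t_term IH /=; case: (a_w k).
pose r i := if i < M then t_term (Var ar i.+1) (t_chain M) else t_chain M.
have eval_r i : i < M -> eval val (r i) = w i.
  by rewrite /r => ->; rewrite eval_t_term eval_chain /=; case: (a_w i).
have r_vars i j : occurs j (r i) <-> occurs j (t_chain M).
  rewrite /r; case: ifP => // lt_iM; rewrite occurs_t_term !occurs_t_chain /=.
  by split=> [[->|]//|le_jM]; right.
have := Mod_prolong_subst A_prolong (Id_sub Sigma_uv) r_vars val.
rewrite /= !eval_subst (eq_eval (g := w)) => [|i occ_i]; last first.
  by apply: eval_r; apply: occ_lt; left.
by rewrite [RHS](eq_eval (g := w)) => // i occ_i; apply: eval_r; apply: occ_lt; right.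
Qed.

Lemma Mod_prolong_Id_maltsev_S : maltsev_S Sigma A.
Proof.
exists t_equiv; split; [exact: t_equiv_congruence|exact: t_equiv_quotient_in_S|].
by move=> a; exists (@t_equiv_class_closed a); apply: t_equiv_class_Mod.
Qed.

End Absorption.
End LeftProjection.
End Terms.

Theorem theorem5p4 (O : Type) (ar : O -> nat) (Hpl : plural ar)
  (Sigma : identity ar -> Prop) (t : term ar) (Ht : in_T 2 t)
  (Hsat : forall A : algebra ar, Mod Sigma A -> holds A (t, Var ar 0)) :
  is_variety (maltsev_S Sigma) /\
  (forall A : algebra ar, maltsev_S Sigma A <-> Mod (prolong (Id Sigma)) A) /\
  (forall A : algebra ar, maltsev_S Sigma A <-> Mod (prolong Sigma) A).
Proof.
have ar_pos := Hpl.1.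
have maltsev_Id A : maltsev_S Sigma A <-> Mod (prolong (Id Sigma)) A.
  split; [exact: maltsev_S_Mod_prolong_Id|exact: Mod_prolong_Id_maltsev_S].
have maltsev_Sigma A : maltsev_S Sigma A <-> Mod (prolong Sigma) A.
  rewrite maltsev_Id; split; last exact: Mod_prolong_Id.
  by apply: Mod_prolongS; apply: Id_sub.
by split; [exists (prolong Sigma)|split].
Qed.
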